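(* Let $R$ be a set of queueing requests issued on a tree $T$ and let $r_i=(v_i,t_i)$, $r_j=(v_j,t_j)$ be two requests of $R$ that are consecutive with respect to time of occurrence ($t_i\le t_j$). Choose requests $r_a=(v_a,t_a)$ with $t_a\le t_i$ and $r_b=(v_b,t_b)$ with $t_b\ge t_j$ minimizing $\delta:=t_b-t_a-d_T(v_a,v_b)$. If $\delta>0$, then replacing every request $r=(v,t)$ with $t\ge t_j$ by the request $r'=(v,t-\delta)$ does not decrease the worst-case (over asynchronous executions) total cost of the Arrow protocol and does not increase the optimal offline cost $\mathrm{OPT}_T$.
   Context: Requests $r=(v,t)$ issued at node $v$ at time $t\ge0$; dummy request $r_0=(v_0,0)$ ordered first. Arrow protocol on a weighted tree $T$: each node $u$ has a pointer $\mathrm{link}(u)$ (itself or a neighbour), initially pointing towards $v_0$ with $\mathrm{link}(v_0)=v_0$. When $r$ is issued at $v$: if $\mathrm{link}(v)=v$, $r$ is queued behind the previous request at $v$; otherwise atomically $\mathrm{find}(r)$ is sent to $\mathrm{link}(v)$ and $\mathrm{link}(v):=v$. When $u$ receives $\mathrm{find}(r)$ from $w$: if $\mathrm{link}(u)=u$, atomically $r$ is queued behind the last request issued at $u$ and $\mathrm{link}(u):=w$; otherwise atomically forwarded to $\mathrm{link}(u)$ and $\mathrm{link}(u):=w$. In an asynchronous execution each delay over edge $e$ is at most $w(e)$. Latency of the $i$-th ordered request $r_i$ ($i\ge1$): arrival time of $\mathrm{find}(r_i)$ at the node of its predecessor minus $t_i$; total cost is the sum of latencies; worst-case cost is the supremum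 over asynchronous executions. $\mathrm{OPT}_T(R)=\min_\pi\sum_{i=1}^{|R|-1}\max\{d_T(v_{\pi(i-1)},v_{\pi(i)}),t_{\pi(i-1)}-t_{\pi(i)}\}$ over orderings with $\pi(0)=0$. *)

From Stdlib Require Import Reals List Permutation ClassicalEpsilon.
From Coquelicot Require Import Rbar Lub.
Import ListNotations.
Open Scope R_scope.

Section Arrow.
Context {V : Type}.

Fixpoint chain (adj : V -> V -> Prop) (p : list V) : Prop :=
  match p with
  | x :: ((y :: _) as t) => adj x y /\ chain adj t
  | _ => True
  end.

Definition spath (adj : V -> V -> Prop) (u v : V) (p : list V) : Prop :=
  (exists q, p = u :: q) /\ last p u = v /\ chain adj p /\ NoDup p.

Fixpoint pweight (w : V -> V -> R) (p : list V) : R :=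
  match p with
  | x :: ((y :: _) as t) => w x y + pweight w t
  | _ => 0
  end.

(* A finite weighted tree: symmetric irreflexive adjacency, symmetric positive
   edge weights, and a unique simple path between any two vertices
   (i.e. connected and acyclic). *)
Record wtree (adj : V -> V -> Prop) (w : V -> V -> R) : Prop := {
  wt_finite : exists l : list V, forall v, In v l;
  wt_sym : forall u v, adj u v -> adj v u;
  wt_irrefl : forall u, ~ adj u u;
  wt_wsym : forall u v, w u v = w v u;
  wt_wpos : forall u v, adj u v -> 0 < w u v;
  wt_upath : forall u v, exists! p, spath adj u v p
}.

Definition tdist (adj : V -> V -> Prop) (w : V -> V -> R) (u v : V) : R :=
  epsilon (inhabits 0) (fun x => exists p, spath adj u v p /\ x = pweight w p).

(* A request set is a list of (node, time) pairs; index 0 is the dummy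
   request r_0 = (v0, 0). Requests are identified by their index. *)
Definition rv (v0 : V) (reqs : list (V * R)) (k : nat) : V := fst (nth k reqs (v0, 0)).
Definition rt (v0 : V) (reqs : list (V * R)) (k : nat) : R := snd (nth k reqs (v0, 0)).

Definition valid_requests (v0 : V) (reqs : list (V * R)) : Prop :=
  nth_error reqs 0 = Some (v0, 0) /\
  (forall v t, In (v, t) reqs -> 0 <= t) /\
  NoDup reqs.

Definition init_link (adj : V -> V -> Prop) (v0 : V) (l : V -> V) : Prop :=
  l v0 = v0 /\
  forall u, u <> v0 -> exists p, spath adj u v0 (u :: l u :: p).

(* a message find(r_k) sent from node x to node u at time s: (k, x, u, s) *)
Definition msg : Type := (nat * V * V * R)%type.

Record config : Type := mkConf {
  c_link : V -> V;
  c_flight : list msg;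
  c_issued : nat -> Prop;
  c_cost : R
}.

Inductive step (w : V -> V -> R) (reqs : list (V * R)) : config -> R -> config -> Prop :=
  | st_issue_local : forall c k v t,
      (1 <= k)%nat -> nth_error reqs k = Some (v, t) -> ~ c_issued c k ->
      c_link c v = v ->
      step w reqs c t
        (mkConf (c_link c) (c_flight c) (fun x => x = k \/ c_issued c x) (c_cost c))
  | st_issue_send : forall c k v t (l' : V -> V),
      (1 <= k)%nat -> nth_error reqs k = Some (v, t) -> ~ c_issued c k ->
      c_link c v <> v ->
      l' v = v -> (forall y, y <> v -> l' y = c_link c y) ->
      step w reqs c t
        (mkConf l' ((k, v, c_link c v, t) :: c_flight c)
                (fun x => x = k \/ c_issued c x) (c_cost c))
  | st_deliver_queue : forall c l1 l2 k x u s tau vk tk (l' : V -> V),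
      c_flight c = l1 ++ (k, x, u, s) :: l2 ->
      s <= tau <= s + w x u ->
      c_link c u = u ->
      nth_error reqs k = Some (vk, tk) ->
      l' u = x -> (forall y, y <> u -> l' y = c_link c y) ->
      step w reqs c tau
        (mkConf l' (l1 ++ l2) (c_issued c) (c_cost c + (tau - tk)))
  | st_deliver_fwd : forall c l1 l2 k x u s tau (l' : V -> V),
      c_flight c = l1 ++ (k, x, u, s) :: l2 ->
      s <= tau <= s + w x u ->
      c_link c u <> u ->
      l' u = x -> (forall y, y <> u -> l' y = c_link c y) ->
      step w reqs c tau
        (mkConf l' (l1 ++ (k, u, c_link c u, tau) :: l2) (c_issued c) (c_cost c)).

(* a finite sequence of events with nondecreasing times (tau = time of the
   previous event) *)
Inductive steps (w : V -> V -> R) (reqs : list (V * R)) : config -> R -> config -> Prop :=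
  | steps_refl : forall c tau, steps w reqs c tau c
  | steps_cons : forall c tau tau' c1 c',
      tau <= tau' -> step w reqs c tau' c1 -> steps w reqs c1 tau' c' ->
      steps w reqs c tau c'.

Definition initial_config (adj : V -> V -> Prop) (v0 : V) (c : config) : Prop :=
  init_link adj v0 (c_link c) /\ c_flight c = [] /\
  (forall k, ~ c_issued c k) /\ c_cost c = 0.

Definition final_config (reqs : list (V * R)) (c : config) : Prop :=
  c_flight c = [] /\ forall k, (1 <= k < length reqs)%nat -> c_issued c k.

Definition arrow_costs (adj : V -> V -> Prop) (w : V -> V -> R) (v0 : V)
    (reqs : list (V * R)) (x : R) : Prop :=
  exists c0 cf, initial_config adj v0 c0 /\ steps w reqs c0 0 cf /\
    final_config reqs cf /\ x = c_cost cf.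

Definition arrow_wc (adj : V -> V -> Prop) (w : V -> V -> R) (v0 : V)
    (reqs : list (V * R)) : Rbar :=
  Lub_Rbar (arrow_costs adj w v0 reqs).

Fixpoint ord_cost (adj : V -> V -> Prop) (w : V -> V -> R) (v0 : V)
    (reqs : list (V * R)) (o : list nat) : R :=
  match o with
  | x :: ((y :: _) as t) =>
      Rmax (tdist adj w (rv v0 reqs x) (rv v0 reqs y)) (rt v0 reqs x - rt v0 reqs y)
      + ord_cost adj w v0 reqs t
  | _ => 0
  end.

Definition opt_costs (adj : V -> V -> Prop) (w : V -> V -> R) (v0 : V)
    (reqs : list (V * R)) (x : R) : Prop :=
  exists o, Permutation (0%nat :: o) (seq 0 (length reqs)) /\
            x = ord_cost adj w v0 reqs (0%nat :: o).

Definition OPT (adj : V -> V -> Prop) (w : V -> V -> R) (v0 : V)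
    (reqs : list (V * R)) : Rbar :=
  Glb_Rbar (opt_costs adj w v0 reqs).

Definition gap (adj : V -> V -> Prop) (w : V -> V -> R) (v0 : V)
    (reqs : list (V * R)) (a b : nat) : R :=
  rt v0 reqs b - rt v0 reqs a - tdist adj w (rv v0 reqs a) (rv v0 reqs b).

Definition shift_reqs (tj delta : R) (reqs : list (V * R)) : list (V * R) :=
  map (fun p => if Rle_dec tj (snd p) then (fst p, snd p - delta) else p) reqs.

End Arrow.

(* Call the requests with t >= t_j late and the others early; by the choice of
   r_a and r_b, delta <= t_y - t_x - d_T(v_x, v_y) for every early r_x and late r_y.

   OPT: each term max(d_T(v_x, v_y), t_x - t_y) of the cost of an ordering can only
   decrease.  It is unchanged when both or neither request is shifted, decreases
   when only r_x is, and when only r_y is, t_x - t_y grows by delta to at most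
   -d_T(v_x, v_y).

   Arrow: an execution on R is replayed on R' by running every event that handles
   a late request delta earlier and the other events unchanged; message delays and
   latencies are preserved, hence so is the cost.  The replay can be put back in
   time order because events at different nodes for different requests commute,
   and at each node every early event precedes every later late event by at least
   delta.  Indeed, if the latest earlier event at [u] is for an early r_x, it
   happened by t_x + d_T(v_x, u) and left [u] pointing back towards v_x, whereas a
   late r_y reaches [u] from v_y through a different neighbour, so
   d_T(v_x, u) <= d_T(v_x, v_y) <= t_y - t_x - delta; if it is for a late request,
   induction applies. *)

From Stdlib Require Import Reals List Lra Lia Permutation ClassicalEpsilon Classical.
From Coquelicot Require Import Rbar Lub.
Import ListNotations.
Open Scope R_scope.

Lemma last_cons_indep {A : Type} (x : A) l d d' : last (x :: l) d = last (x :: l) d'.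
Proof.
  revert x; induction l as [|y l IH]; intros x; [reflexivity|].
  exact (IH y).
Qed.

Lemma last_app_cons {A : Type} (l1 : list A) x l2 d :
  last (l1 ++ x :: l2) d = last (x :: l2) x.
Proof.
  induction l1 as [|a l1 IH]; [apply last_cons_indep|].
  rewrite <- IH. simpl. destruct (l1 ++ x :: l2) eqn:E; [destruct l1; discriminate|].
  reflexivity.
Qed.

Lemma first_occurrence {A B : Type} (f : A -> B) (b : B) (l : list A) :
  (forall e, In e l -> f e <> b) \/
  exists l1 g l2, l = l1 ++ g :: l2 /\ f g = b /\ forall e, In e l1 -> f e <> b.
Proof.
  induction l as [|e l IH]; [left; intros e []|].
  destruct (classic (f e = b)) as [Eb|Nb].
  - right. exists [], e, l. split; [reflexivity|]. split; [exact Eb|]. intros e' [].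
  - destruct IH as [IH|[l1 [g [l2 [E [Hg Hl1]]]]]].
    + left. intros e' [<-|He']; auto.
    + right. exists (e :: l1), g, l2. rewrite E. split; [reflexivity|]. split; [exact Hg|].
      intros e' [<-|He']; auto.
Qed.

Lemma Glb_Rbar_le_dominated (E F : R -> Prop) :
  (forall x, E x -> exists y, F y /\ y <= x) -> Rbar_le (Glb_Rbar F) (Glb_Rbar E).
Proof.
  intros H. destruct (Glb_Rbar_correct F) as [HlbF _].
  destruct (Glb_Rbar_correct E) as [_ HgrE].
  apply HgrE. intros x Hx. destruct (H x Hx) as [y [Hy Hyx]].
  apply Rbar_le_trans with y; [exact (HlbF y Hy) | exact Hyx].
Qed.

Section ForallOrdPairsLemmas.
Context {A : Type} (Rl : A -> A -> Prop) (Rl_sym : forall a b, Rl a b -> Rl b a).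

Lemma ForallOrdPairs_remove l1 m l2 :
  ForallOrdPairs Rl (l1 ++ m :: l2) -> ForallOrdPairs Rl (l1 ++ l2).
Proof.
  induction l1 as [|a l1 IH]; simpl; intros H; inversion H; subst; auto.
  constructor; auto. rewrite Forall_forall in *. intros y Hy. apply H2.
  apply in_app_or in Hy; apply in_or_app; destruct Hy; [left|right; right]; auto.
Qed.

Lemma ForallOrdPairs_removed l1 m l2 : ForallOrdPairs Rl (l1 ++ m :: l2) ->
  forall m', In m' (l1 ++ l2) -> Rl m m'.
Proof.
  induction l1 as [|a l1 IH]; simpl; intros H m' Hm'; inversion H; subst.
  - rewrite Forall_forall in H2. auto.
  - destruct Hm' as [<-|Hm']; [|auto].
    apply Rl_sym. rewrite Forall_forall in H2. apply H2, in_or_app. right; left; auto.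
Qed.

Lemma ForallOrdPairs_insert l1 m l2 : ForallOrdPairs Rl (l1 ++ l2) ->
  (forall m', In m' (l1 ++ l2) -> Rl m m') -> ForallOrdPairs Rl (l1 ++ m :: l2).
Proof.
  induction l1 as [|a l1 IH]; simpl; intros H Hm.
  - constructor; auto. rewrite Forall_forall; auto.
  - inversion H; subst. constructor; [|auto].
    rewrite Forall_forall in *. intros y Hy. apply in_app_or in Hy.
    destruct Hy as [Hy|[<-|Hy]]; auto; apply H2, in_or_app; auto.
Qed.

End ForallOrdPairsLemmas.

Section TreePaths.
Context {V : Type} (adj : V -> V -> Prop) (w : V -> V -> R) (HT : wtree adj w).

Lemma adj_neq x u : adj x u -> x <> u.
Proof. intros H ->. exact (wt_irrefl _ _ HT u H). Qed.

Lemma chain_app l1 (x : V) l2 :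
  chain adj (l1 ++ x :: l2) <-> chain adj (l1 ++ [x]) /\ chain adj (x :: l2).
Proof.
  induction l1 as [|a [|b l1] IH]; simpl in *.
  - destruct l2; simpl; tauto.
  - destruct l2; simpl; tauto.
  - rewrite IH. tauto.
Qed.

Lemma pweight_app l1 (x : V) l2 :
  pweight w (l1 ++ x :: l2) = pweight w (l1 ++ [x]) + pweight w (x :: l2).
Proof.
  induction l1 as [|a [|b l1] IH]; simpl in *.
  - destruct l2; simpl; lra.
  - destruct l2; simpl; lra.
  - rewrite IH. lra.
Qed.

Lemma chain_rev l : chain adj l -> chain adj (rev l).
Proof.
  induction l as [|a [|b l] IH]; simpl; auto.
  intros [Hab Hc]. rewrite <- app_assoc. apply chain_app. split; [exact (IH Hc)|].
  split; [apply (wt_sym _ _ HT); exact Hab | exact I].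
Qed.

Lemma pweight_rev l : pweight w (rev l) = pweight w l.
Proof.
  induction l as [|a [|b l] IH]; simpl; auto.
  simpl in IH. rewrite <- app_assoc. simpl. rewrite pweight_app, IH. simpl.
  rewrite (wt_wsym _ _ HT b a). lra.
Qed.

Lemma pweight_nonneg l : chain adj l -> 0 <= pweight w l.
Proof.
  induction l as [|a [|b l] IH]; simpl; try lra.
  intros [Hab Hc]. pose proof (wt_wpos _ _ HT a b Hab). specialize (IH Hc). simpl in IH. lra.
Qed.

Lemma spath_unique u v p q : spath adj u v p -> spath adj u v q -> p = q.
Proof.
  intros Hp Hq. destruct (wt_upath _ _ HT u v) as [r [_ Hu]].
  now rewrite <- (Hu p Hp), <- (Hu q Hq).
Qed.

Lemma tdist_spec u v p : spath adj u v p -> tdist adj w u v = pweight w p.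
Proof.
  intros Hp. unfold tdist.
  destruct (epsilon_spec (inhabits 0) (fun x => exists p, spath adj u v p /\ x = pweight w p))
    as [p' [Hp' ->]]; [eauto|].
  now rewrite (spath_unique _ _ _ _ Hp' Hp).
Qed.

Lemma tdist_nonneg u v : 0 <= tdist adj w u v.
Proof.
  destruct (wt_upath _ _ HT u v) as [p [Hp _]].
  rewrite (tdist_spec _ _ _ Hp). apply pweight_nonneg, Hp.
Qed.

Lemma spath_refl u : spath adj u u [u].
Proof. repeat split; eauto. repeat constructor; auto. Qed.

Lemma tdist_refl u : tdist adj w u u = 0.
Proof. now rewrite (tdist_spec _ _ _ (spath_refl u)). Qed.

Lemma spath_edge u z : adj u z -> spath adj u z [u; z].
Proof.
  intros H. repeat split; eauto.
  constructor; [|repeat constructor; auto].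
  intros [E|[]]. exact (adj_neq _ _ H (eq_sym E)).
Qed.

Lemma spath_suffix a b l1 (x : V) l2 :
  spath adj a b (l1 ++ x :: l2) -> spath adj x b (x :: l2).
Proof.
  intros [_ [Hl [Hc Hn]]]. repeat split; eauto.
  - rewrite last_app_cons in Hl. rewrite <- Hl. apply last_cons_indep.
  - apply chain_app in Hc. tauto.
  - exact (NoDup_app_remove_l _ _ Hn).
Qed.

Lemma spath_last a x q : spath adj a x q -> exists q', q = q' ++ [x].
Proof.
  intros [[q0 ->] [Hl _]].
  destruct (exists_last (l := a :: q0)) as [q' [y Hy]]; [discriminate|].
  exists q'. rewrite Hy in Hl |- *. now rewrite last_last in Hl; subst.
Qed.

(* [u] is entered from its neighbour [x] on the simple path from [a]. *)
Definition enters_from (a x u : V) : Prop :=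
  exists q, spath adj a x q /\ spath adj a u (q ++ [u]).

Lemma enters_from_tdist a x u :
  enters_from a x u -> tdist adj w a u = tdist adj w a x + w x u.
Proof.
  intros [q [Hq Hu]]. rewrite (tdist_spec _ _ _ Hq), (tdist_spec _ _ _ Hu).
  destruct (spath_last _ _ _ Hq) as [q' ->].
  rewrite <- app_assoc. simpl. rewrite pweight_app. simpl. lra.
Qed.

Lemma enters_from_edge a z : adj a z -> enters_from a a z.
Proof. intros H. exists [a]. split; [apply spath_refl | apply spath_edge, H]. Qed.

Lemma enters_from_step a x u z :
  enters_from a x u -> adj u z -> z <> x -> enters_from a u z.
Proof.
  intros [q [Hq Hu]] Huz Hzx. exists (q ++ [u]). split; [exact Hu|].
  destruct Hu as [[q0 Hq0] [Hl [Hc Hn]]].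
  assert (Hzq : ~ In z (q ++ [u])).
  { intros Hin. apply in_app_or in Hin.
    destruct Hin as [Hin|[E|[]]]; [|exact (adj_neq _ _ Huz E)].
    (* otherwise [z ... u] and [z; u] would be two simple paths from z to u *)
    destruct (in_split _ _ Hin) as [l1 [l2 E]].
    assert (S1 : spath adj z u (z :: l2 ++ [u])).
    { apply (spath_suffix a u l1). rewrite app_comm_cons, app_assoc, <- E.
      repeat split; eauto. }
    assert (S2 : spath adj z u [z; u]) by (apply spath_edge, (wt_sym _ _ HT), Huz).
    injection (spath_unique _ _ _ _ S1 S2) as E2.
    destruct l2 as [|y [|]]; try discriminate.
    destruct (spath_last _ _ _ Hq) as [q' Hq'].
    rewrite E, Hq' in *. apply app_inj_tail in Hq'. destruct Hq' as [_ Hx]. congruence. }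
  repeat split.
  - rewrite Hq0. eexists; reflexivity.
  - apply last_last.
  - rewrite <- app_assoc. apply chain_app. split; [exact Hc | split; [exact Huz | exact I]].
  - apply NoDup_app; [exact Hn | repeat constructor; auto |].
    intros y Hy [<-|[]]. exact (Hzq Hy).
Qed.

Lemma tdist_split_at a s b p u :
  enters_from a s u -> enters_from b p u -> s <> p ->
  tdist adj w a b = tdist adj w a u + tdist adj w b u.
Proof.
  intros [qa [Hqa Hua]] [qb [Hqb Hub]] Hsp.
  assert (Disj : forall y, In y qa -> In y qb -> False).
  { intros y Ha Hb.
    destruct (in_split _ _ Ha) as [la [ra Ea]].
    destruct (in_split _ _ Hb) as [lb [rb Eb]].
    assert (S1 : spath adj y u (y :: ra ++ [u])).
    { apply (spath_suffix a u la). rewrite app_comm_cons, app_assoc, <- Ea. exact Hua. }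
    assert (S2 : spath adj y u (y :: rb ++ [u])).
    { apply (spath_suffix b u lb). rewrite app_comm_cons, app_assoc, <- Eb. exact Hub. }
    injection (spath_unique _ _ _ _ S1 S2) as E. apply app_inj_tail in E as [-> _].
    destruct Hqa as [_ [La _]]. destruct Hqb as [_ [Lb _]].
    rewrite Ea, last_app_cons in La. rewrite Eb, last_app_cons in Lb. congruence. }
  assert (Hrev : u :: rev qb = rev (qb ++ [u])) by (rewrite rev_app_distr; reflexivity).
  assert (Hp : spath adj a b (qa ++ u :: rev qb)).
  { destruct Hua as [[q0 Hq0] [Hla [Hca Hna]]].
    destruct Hub as [_ [_ [Hcb Hnb]]].
    repeat split.
    - destruct qa as [|c qa]; injection Hq0 as -> _; eexists; reflexivity.
    - rewrite last_app_cons. destruct Hqb as [[qb' ->] _].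
      simpl rev. now rewrite app_comm_cons, last_last.
    - apply chain_app. split; [exact Hca|]. rewrite Hrev. apply chain_rev, Hcb.
    - apply NoDup_app; [exact (NoDup_app_remove_r _ _ Hna) | rewrite Hrev; apply NoDup_rev, Hnb |].
      intros y Hy [<-|Hy2].
      + apply NoDup_remove_2 in Hna. rewrite app_nil_r in Hna. exact (Hna Hy).
      + apply in_rev in Hy2. exact (Disj y Hy Hy2). }
  rewrite (tdist_spec _ _ _ Hp), (tdist_spec _ _ _ Hua), (tdist_spec _ _ _ Hub).
  now rewrite pweight_app, Hrev, pweight_rev.
Qed.

Lemma tdist_le_of_enters_from a s b p u :
  enters_from a s u -> enters_from b p u -> s <> p ->
  tdist adj w a u <= tdist adj w a b.
Proof.
  intros Ha Hb Hsp. rewrite (tdist_split_at a s b p u Ha Hb Hsp).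
  pose proof (tdist_nonneg b u). lra.
Qed.

End TreePaths.

Section Events.
Context {V : Type} (w : V -> V -> R) (reqs : list (V * R)).

Inductive labelled_step : config -> R -> config -> nat -> V -> Prop :=
  | ls_issue_local : forall c k v t,
      (1 <= k)%nat -> nth_error reqs k = Some (v, t) -> ~ c_issued c k ->
      c_link c v = v ->
      labelled_step c t
        (mkConf (c_link c) (c_flight c) (fun x => x = k \/ c_issued c x) (c_cost c)) k v
  | ls_issue_send : forall c k v t (l' : V -> V),
      (1 <= k)%nat -> nth_error reqs k = Some (v, t) -> ~ c_issued c k ->
      c_link c v <> v ->
      l' v = v -> (forall y, y <> v -> l' y = c_link c y) ->
      labelled_step c t
        (mkConf l' ((k, v, c_link c v, t) :: c_flight c)
                (fun x => x = k \/ c_issued c x) (c_cost c)) k v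
  | ls_deliver_queue : forall c l1 l2 k x u s tau vk tk (l' : V -> V),
      c_flight c = l1 ++ (k, x, u, s) :: l2 ->
      s <= tau <= s + w x u ->
      c_link c u = u ->
      nth_error reqs k = Some (vk, tk) ->
      l' u = x -> (forall y, y <> u -> l' y = c_link c y) ->
      labelled_step c tau
        (mkConf l' (l1 ++ l2) (c_issued c) (c_cost c + (tau - tk))) k u
  | ls_deliver_fwd : forall c l1 l2 k x u s tau (l' : V -> V),
      c_flight c = l1 ++ (k, x, u, s) :: l2 ->
      s <= tau <= s + w x u ->
      c_link c u <> u ->
      l' u = x -> (forall y, y <> u -> l' y = c_link c y) ->
      labelled_step c tau
        (mkConf l' (l1 ++ (k, u, c_link c u, tau) :: l2) (c_issued c) (c_cost c)) k u.

Lemma labelled_step_step c t c' k u : labelled_step c t c' k u -> step w reqs c t c'.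
Proof. intros H; destruct H; econstructor; eauto. Qed.

Lemma step_labelled_step c t c' : step w reqs c t c' -> exists k u, labelled_step c t c' k u.
Proof. intros H; destruct H; do 2 eexists; econstructor; eauto. Qed.

Lemma labelled_step_link_other c t c' k u : labelled_step c t c' k u ->
  forall y, y <> u -> c_link c' y = c_link c y.
Proof. intros H; destruct H; simpl; auto. Qed.

Definition conf_equiv (c d : @config V) : Prop :=
  (forall y, c_link c y = c_link d y) /\ Permutation (c_flight c) (c_flight d) /\
  (forall x, c_issued c x <-> c_issued d x) /\ c_cost c = c_cost d.

Lemma conf_equiv_refl c : conf_equiv c c.
Proof. repeat split; auto. Qed.

Lemma conf_equiv_sym c d : conf_equiv c d -> conf_equiv d c.
Proof.
  intros [H1 [H2 [H3 H4]]]. repeat split; intros; try symmetry; auto; apply H3; auto.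
Qed.

Lemma conf_equiv_trans c d e : conf_equiv c d -> conf_equiv d e -> conf_equiv c e.
Proof.
  intros [H1 [H2 [H3 H4]]] [G1 [G2 [G3 G4]]]. repeat split.
  - intros y. now rewrite H1.
  - eapply perm_trans; eauto.
  - intros Hx. apply G3, H3, Hx.
  - intros Hx. apply H3, G3, Hx.
  - congruence.
Qed.

Definition opt_list (o : option (@msg V)) : list (@msg V) :=
  match o with Some m => [m] | None => [] end.

(* Every event acts locally: at its node [u] it resets the pointer, consumes and
   produces at most one message, may mark its request issued and adds to the
   cost. *)
Record effect := Effect {
  eff_link : V; eff_consumed : option (@msg V); eff_produced : option (@msg V);
  eff_issues : bool; eff_cost : R }.

Inductive enabled (lk : V) (issued : Prop) (tau : R) (k : nat) (u : V) : effect -> Prop :=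
  | en_issue_local :
      (1 <= k)%nat -> nth_error reqs k = Some (u, tau) -> ~ issued -> lk = u ->
      enabled lk issued tau k u (Effect u None None true 0)
  | en_issue_send :
      (1 <= k)%nat -> nth_error reqs k = Some (u, tau) -> ~ issued -> lk <> u ->
      enabled lk issued tau k u (Effect u None (Some (k, u, lk, tau)) true 0)
  | en_deliver_queue : forall x s vk tk,
      s <= tau <= s + w x u -> lk = u -> nth_error reqs k = Some (vk, tk) ->
      enabled lk issued tau k u (Effect x (Some (k, x, u, s)) None false (tau - tk))
  | en_deliver_fwd : forall x s,
      s <= tau <= s + w x u -> lk <> u ->
      enabled lk issued tau k u (Effect x (Some (k, x, u, s)) (Some (k, u, lk, tau)) false 0).

Definition applied (c : @config V) (u : V) (k : nat) (e : effect) (c' : @config V) : Prop :=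
  c_link c' u = eff_link e /\ (forall y, y <> u -> c_link c' y = c_link c y) /\
  (exists L, Permutation (c_flight c) (opt_list (eff_consumed e) ++ L) /\
             Permutation (c_flight c') (opt_list (eff_produced e) ++ L)) /\
  (forall x, c_issued c' x <-> (eff_issues e = true /\ x = k) \/ c_issued c x) /\
  c_cost c' = c_cost c + eff_cost e.

Lemma labelled_step_effect c t c' k u : labelled_step c t c' k u ->
  exists e, enabled (c_link c u) (c_issued c k) t k u e /\ applied c u k e c'.
Proof.
  intros H; destruct H.
  - eexists; split; [apply en_issue_local; auto|].
    repeat split; simpl; auto; [exists (c_flight c); simpl; auto | | | lra];
      intuition congruence.
  - eexists; split; [apply en_issue_send; auto|].
    repeat split; simpl; auto; [exists (c_flight c); simpl; auto | | | lra];
      intuition congruence.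
  - eexists; split; [eapply en_deliver_queue; eauto|].
    repeat split; simpl; auto; [|intuition discriminate].
    exists (l1 ++ l2); simpl; split; auto. rewrite H. apply Permutation_sym, Permutation_middle.
  - eexists; split; [eapply en_deliver_fwd; eauto|].
    repeat split; simpl; auto; [| intuition discriminate | lra].
    exists (l1 ++ l2); simpl; split; [rewrite H|]; apply Permutation_sym, Permutation_middle.
Qed.

Lemma Permutation_cons_split (m : @msg V) F L : Permutation F (m :: L) ->
  exists l1 l2, F = l1 ++ m :: l2 /\ Permutation L (l1 ++ l2).
Proof.
  intros HP.
  destruct (in_split m F) as [l1 [l2 ->]];
    [apply (Permutation_in m (Permutation_sym HP)); left; auto|].
  exists l1, l2. split; [reflexivity|].
  apply Permutation_cons_inv with m. eapply perm_trans; [apply Permutation_sym, HP|].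
  apply Permutation_sym, Permutation_middle.
Qed.

Lemma effect_labelled_step c t c' k u e :
  enabled (c_link c u) (c_issued c k) t k u e -> applied c u k e c' ->
  exists c'', labelled_step c t c'' k u /\ conf_equiv c' c''.
Proof.
  intros Hen [A1 [A2 [[L [P1 P2]] [A4 A5]]]].
  destruct Hen as [H1 H2 H3 H4 | H1 H2 H3 H4 | x s vk tk H1 H2 H3 | x s H1 H2]; simpl in *.
  - eexists; split; [apply ls_issue_local; eauto|].
    repeat split; simpl.
    + intros y. destruct (classic (y = u)) as [->|n]; [congruence|auto].
    + eapply perm_trans; eauto. apply Permutation_sym; auto.
    + intros Hx. apply A4 in Hx. intuition.
    + intros Hx. apply A4. intuition.
    + lra.
  - eexists; split; [apply ls_issue_send with (l' := c_link c'); eauto|].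
    repeat split; simpl.
    + eapply perm_trans; eauto. simpl. constructor. apply Permutation_sym; auto.
    + intros Hx. apply A4 in Hx. intuition.
    + intros Hx. apply A4. intuition.
    + lra.
  - destruct (Permutation_cons_split _ _ _ P1) as [l1 [l2 [E HL]]].
    eexists; split; [eapply ls_deliver_queue with (l' := c_link c'); eauto|].
    repeat split; simpl; auto.
    + eapply perm_trans; eauto.
    + intros Hx. apply A4 in Hx. intuition discriminate.
    + intros Hx. apply A4. auto.
  - destruct (Permutation_cons_split _ _ _ P1) as [l1 [l2 [E HL]]].
    eexists; split; [eapply ls_deliver_fwd with (l' := c_link c'); eauto|].
    repeat split; simpl.
    + eapply perm_trans; eauto. eapply perm_trans; [|apply Permutation_middle].
      constructor; auto.
    + intros Hx. apply A4 in Hx. intuition discriminate.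
    + intros Hx. apply A4. auto.
    + lra.
Qed.

Lemma enabled_issued_iff lk P Q t k u e :
  enabled lk P t k u e -> (P <-> Q) -> enabled lk Q t k u e.
Proof. intros H HPQ. destruct H; econstructor; eauto; tauto. Qed.

Lemma applied_equiv c d u k e c' : applied c u k e c' -> conf_equiv c d -> applied d u k e c'.
Proof.
  intros [A1 [A2 [[L [P1 P2]] [A4 A5]]]] [C1 [C2 [C3 C4]]].
  repeat split; auto.
  - intros y Hy. rewrite A2; auto.
  - exists L; split; auto. eapply perm_trans; [apply Permutation_sym, C2|]; auto.
  - intros Hx. apply A4 in Hx. destruct Hx; [left|right; apply C3]; auto.
  - intros Hx. apply A4. destruct Hx; [left|right; apply C3]; auto.
  - congruence.
Qed.

Lemma labelled_step_equiv c d t c' k u : labelled_step c t c' k u -> conf_equiv c d ->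
  exists d', labelled_step d t d' k u /\ conf_equiv c' d'.
Proof.
  intros H Hcd. destruct (labelled_step_effect _ _ _ _ _ H) as [e [He Ha]].
  apply effect_labelled_step with (e := e).
  - destruct Hcd as [C1 [_ [C3 _]]]. rewrite <- C1. eapply enabled_issued_iff; eauto.
  - eapply applied_equiv; eauto.
Qed.

Lemma enabled_msg_request lk isk t k u e : enabled lk isk t k u e ->
  (forall m, In m (opt_list (eff_consumed e)) -> fst (fst (fst m)) = k) /\
  (forall m, In m (opt_list (eff_produced e)) -> fst (fst (fst m)) = k).
Proof.
  intros H. destruct H; simpl;
    split; intros m Hm; repeat (destruct Hm as [<-|Hm]; [reflexivity|]); destruct Hm.
Qed.

Lemma opt_list_length o : (length (opt_list o) <= 1)%nat.
Proof. destruct o; simpl; lia. Qed.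

(* Two successive consumptions/productions of messages can be performed in the other
   order, provided the second one does not consume what the first one produced. *)
Lemma Permutation_exchange (F F1 F2 C1 P1 L1 C2 P2 L2 : list (@msg V)) :
  Permutation F (C1 ++ L1) -> Permutation F1 (P1 ++ L1) ->
  Permutation F1 (C2 ++ L2) -> Permutation F2 (P2 ++ L2) ->
  (forall m, In m C2 -> ~ In m P1) -> (length C2 <= 1)%nat ->
  exists N, Permutation F (C2 ++ C1 ++ N) /\ Permutation F2 (P1 ++ P2 ++ N).
Proof.
  intros H1 H2 H3 H4 Hd Hl.
  destruct C2 as [|m2 [|m3 C2]]; simpl in Hl; try lia.
  - exists L1. split; [exact H1|].
    eapply perm_trans; [apply H4|]. rewrite app_assoc.
    eapply perm_trans; [|apply Permutation_app_tail; apply Permutation_app_comm].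
    rewrite <- app_assoc. apply Permutation_app_head.
    eapply perm_trans; [apply Permutation_sym, H3|]. exact H2.
  - assert (Hin : In m2 (P1 ++ L1)).
    { apply (Permutation_in m2 H2), (Permutation_in m2 (Permutation_sym H3)). left; auto. }
    apply in_app_or in Hin. destruct Hin as [Hin|Hin]; [exfalso; apply (Hd m2); [left|]; auto|].
    destruct (in_split _ _ Hin) as [A [B ->]].
    exists (A ++ B). split.
    + eapply perm_trans; [apply H1|]. simpl.
      eapply perm_trans; [apply Permutation_app_head, Permutation_sym, Permutation_middle|].
      apply Permutation_sym, Permutation_middle.
    + assert (HL2 : Permutation L2 (P1 ++ A ++ B)).
      { apply Permutation_cons_inv with m2.
        eapply perm_trans; [apply Permutation_sym, H3|].
        eapply perm_trans; [apply H2|].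
        eapply perm_trans; [apply Permutation_app_head, Permutation_sym, Permutation_middle|].
        apply Permutation_sym, Permutation_middle. }
      eapply perm_trans; [apply H4|].
      eapply perm_trans; [apply Permutation_app_head, HL2|].
      rewrite (app_assoc P2 P1), (app_assoc P1 P2).
      apply Permutation_app_tail, Permutation_app_comm.
Qed.

Definition upd (f : V -> V) (u : V) (n : V) : V -> V :=
  fun y => if excluded_middle_informative (y = u) then n else f y.

Lemma upd_eq f u n : upd f u n u = n.
Proof. unfold upd. destruct excluded_middle_informative; congruence. Qed.

Lemma upd_neq f u n y : y <> u -> upd f u n y = f y.
Proof. unfold upd. destruct excluded_middle_informative; congruence. Qed.

Lemma applied_swap c c1 c2 u1 k1 e1 u2 k2 e2 :
  applied c u1 k1 e1 c1 -> applied c1 u2 k2 e2 c2 -> u1 <> u2 ->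
  (forall m, In m (opt_list (eff_consumed e2)) -> ~ In m (opt_list (eff_produced e1))) ->
  exists c1' c2', applied c u2 k2 e2 c1' /\ applied c1' u1 k1 e1 c2' /\ conf_equiv c2 c2'.
Proof.
  intros [A1 [A2 [[L1 [P1 P2]] [A4 A5]]]] [B1 [B2 [[L2 [Q1 Q2]] [B4 B5]]]] Hu Hd.
  destruct (Permutation_exchange (c_flight c) (c_flight c1) (c_flight c2)
     (opt_list (eff_consumed e1)) (opt_list (eff_produced e1)) L1
     (opt_list (eff_consumed e2)) (opt_list (eff_produced e2)) L2)
    as [N [HN1 HN2]]; auto using opt_list_length.
  set (l1 := upd (c_link c) u2 (eff_link e2)).
  exists (mkConf l1 (opt_list (eff_produced e2) ++ opt_list (eff_consumed e1) ++ N)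
            (fun x => (eff_issues e2 = true /\ x = k2) \/ c_issued c x)
            (c_cost c + eff_cost e2)).
  exists (mkConf (upd l1 u1 (eff_link e1))
            (opt_list (eff_produced e1) ++ opt_list (eff_produced e2) ++ N)
            (fun x => (eff_issues e1 = true /\ x = k1) \/
                      (eff_issues e2 = true /\ x = k2) \/ c_issued c x)
            (c_cost c + eff_cost e2 + eff_cost e1)).
  split; [|split].
  - repeat split; simpl; auto; [apply upd_eq | intros y Hy; apply upd_neq; auto |].
    exists (opt_list (eff_consumed e1) ++ N); split; auto.
  - repeat split; simpl; auto; [apply upd_eq | intros y Hy; apply upd_neq; auto |].
    exists (opt_list (eff_produced e2) ++ N); split; auto.
    rewrite !app_assoc. apply Permutation_app_tail, Permutation_app_comm.
  - repeat split; simpl.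
    + intros y. unfold l1. destruct (classic (y = u1)) as [->|n1].
      * rewrite upd_eq, B2 by auto. auto.
      * rewrite upd_neq by auto. destruct (classic (y = u2)) as [->|n2].
        -- now rewrite upd_eq.
        -- rewrite upd_neq, B2, A2 by auto. reflexivity.
    + exact HN2.
    + intros Hx. apply B4 in Hx. rewrite A4 in Hx. tauto.
    + intros Hx. apply B4. rewrite A4. tauto.
    + rewrite B5, A5. lra.
Qed.

(* Events at different nodes for different requests commute: neither reads what
   the other writes. *)
Lemma labelled_step_swap c s c1 k1 u1 t c2 k2 u2 :
  labelled_step c s c1 k1 u1 -> labelled_step c1 t c2 k2 u2 -> u1 <> u2 -> k1 <> k2 ->
  exists c1' c2', labelled_step c t c1' k2 u2 /\ labelled_step c1' s c2' k1 u1 /\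
    conf_equiv c2 c2'.
Proof.
  intros S1 S2 Hu Hk.
  destruct (labelled_step_effect _ _ _ _ _ S1) as [e1 [E1 Ap1]].
  destruct (labelled_step_effect _ _ _ _ _ S2) as [e2 [E2 Ap2]].
  destruct (applied_swap _ _ _ _ _ _ _ _ _ Ap1 Ap2 Hu) as [d1 [d2 [Bp2 [Bp1 Hd2]]]].
  { intros m Hm Hm'. apply (enabled_msg_request _ _ _ _ _ _ E2) in Hm.
    apply (enabled_msg_request _ _ _ _ _ _ E1) in Hm'. congruence. }
  assert (Hen2 : enabled (c_link c u2) (c_issued c k2) t k2 u2 e2).
  { destruct Ap1 as [_ [A2 [_ [A4 _]]]]. rewrite <- (A2 u2) by auto.
    eapply enabled_issued_iff; [apply E2|]. rewrite A4. intuition congruence. }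
  assert (Hen1 : enabled (c_link d1 u1) (c_issued d1 k1) s k1 u1 e1).
  { destruct Bp2 as [_ [B2 [_ [B4 _]]]]. rewrite B2 by auto.
    eapply enabled_issued_iff; [apply E1|]. rewrite B4. intuition congruence. }
  destruct (effect_labelled_step _ _ _ _ _ _ Hen2 Bp2) as [c1' [S1' Hc1]].
  destruct (effect_labelled_step _ _ _ _ _ _ Hen1 Bp1) as [d2' [S2' Hc2]].
  destruct (labelled_step_equiv _ _ _ _ _ _ S2' Hc1) as [c2' [S2'' Hc2']].
  exists c1', c2'. split; [exact S1'|]. split; [exact S2''|].
  eapply conf_equiv_trans; [exact Hd2|]. eapply conf_equiv_trans; eauto.
Qed.

(* Traces list the events of an execution, most recent first, as (time, request, node). *)
Inductive trace (c0 : @config V) : list (R * nat * V) -> config -> R -> Prop :=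
  | tr_nil : trace c0 [] c0 0
  | tr_cons : forall l c th t c' k u,
      trace c0 l c th -> th <= t -> labelled_step c t c' k u ->
      trace c0 ((t, k, u) :: l) c' t.

Lemma trace_steps c0 l c th : trace c0 l c th ->
  forall c'', steps w reqs c th c'' -> steps w reqs c0 0 c''.
Proof.
  induction 1; intros c'' Hs; auto.
  apply IHtrace. eapply steps_cons; eauto. eapply labelled_step_step; eauto.
Qed.

Lemma steps_trace c0 c th cf : steps w reqs c th cf ->
  forall l, trace c0 l c th -> exists l' th', trace c0 l' cf th'.
Proof.
  induction 1; intros l Hl; eauto.
  destruct (step_labelled_step _ _ _ H0) as [k [u Hl1]].
  apply (IHsteps ((tau', k, u) :: l)). econstructor; eauto.
Qed.

Lemma trace_time c0 l c th : trace c0 l c th -> forall e, In e l -> fst (fst e) <= th.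
Proof.
  induction 1; intros e He; [destruct He|].
  destruct He as [<-|He]; simpl; [lra|]. specialize (IHtrace e He). lra.
Qed.

Lemma trace_sorted c0 l c th : trace c0 l c th ->
  forall l1 g l2, l = l1 ++ g :: l2 -> forall e, In e l2 -> fst (fst e) <= fst (fst g).
Proof.
  induction 1 as [|l c th t c' k u Htr IH Hth S]; intros l1 g l2 E e He;
    [destruct l1; discriminate|].
  destruct l1 as [|e' l1].
  - injection E as <- <-. simpl. pose proof (trace_time _ _ _ _ Htr e He). lra.
  - injection E as _ E. eapply IH; eauto.
Qed.

(* The new event is commuted leftwards past the events later than it. *)
Lemma trace_insert c0 l c th t c2 k u :
  trace c0 l c th -> labelled_step c t c2 k u -> 0 <= t ->
  (forall s k' u', In (s, k', u') l -> t < s -> u' <> u /\ k' <> k) ->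
  exists l' c2' th', trace c0 l' c2' th' /\ conf_equiv c2 c2' /\ th' <= Rmax th t /\
     (forall e, In e l' -> e = (t, k, u) \/ In e l).
Proof.
  intros Htr. revert t c2 k u.
  induction Htr as [|l c th s c1 k1 u1 Htr IH Hth S1]; intros t c2 k u S Ht Hcond.
  - exists [(t, k, u)], c2, t. split; [econstructor; eauto; constructor|].
    split; [apply conf_equiv_refl|]. split; [apply Rmax_r|].
    intros e [<-|[]]; auto.
  - destruct (Rle_dec s t) as [Hst|Hst].
    + exists ((t, k, u) :: (s, k1, u1) :: l), c2, t.
      split; [econstructor; eauto; econstructor; eauto|].
      split; [apply conf_equiv_refl|]. split; [apply Rmax_r|].
      intros e [<-|He]; auto.
    + destruct (Hcond s k1 u1 (or_introl eq_refl) ltac:(lra)) as [Hu Hk].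
      destruct (labelled_step_swap _ _ _ _ _ _ _ _ _ S1 S Hu Hk) as [c1' [c2' [T1 [T2 Hc]]]].
      destruct (IH t c1' k u T1 Ht) as [l' [c1'' [th' [Tr' [Hc1 [Hth' Hin]]]]]].
      { intros s' k' u' Hin Hlt. exact (Hcond s' k' u' (or_intror Hin) Hlt). }
      destruct (labelled_step_equiv _ _ _ _ _ _ T2 Hc1) as [c2'' [T2' Hc2]].
      exists ((s, k1, u1) :: l'), c2'', s.
      split; [econstructor; eauto; unfold Rmax in Hth'; destruct (Rle_dec th t); lra|].
      split; [eapply conf_equiv_trans; eauto|]. split; [apply Rmax_l|].
      intros e [<-|He]; [right; left; reflexivity|].
      destruct (Hin e He); auto. right; right; auto.
Qed.

End Events.

Section ArrowInvariant.
Context {V : Type} (adj : V -> V -> Prop) (w : V -> V -> R) (HT : wtree adj w)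
  (reqs : list (V * R)) (v0 : V).

Definition link_ok (l : V -> V) : Prop :=
  forall u, l u <> u -> adj u (l u) /\ l (l u) <> u.

Definition msg_ok (l : V -> V) (m : @msg V) : Prop :=
  let '(k, x, u, s) := m in
  adj x u /\ l u <> x /\ l x <> u /\
  exists vk tk, nth_error reqs k = Some (vk, tk) /\
    tk <= s <= tk + tdist adj w vk x /\ enters_from adj vk x u.

Definition same_edge (x u x' u' : V) : Prop := (x = x' /\ u = u') \/ (x = u' /\ u = x').

Definition edge_distinct (m m' : @msg V) : Prop :=
  let '(_, x, u, _) := m in let '(_, x', u', _) := m' in ~ same_edge x u x' u'.

Lemma edge_distinct_sym m m' : edge_distinct m m' -> edge_distinct m' m.
Proof.
  destruct m as [[[k x] u] s], m' as [[[k' x'] u'] s']; unfold edge_distinct, same_edge.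
  intros H [[-> ->]|[-> ->]]; apply H; auto.
Qed.

(* At most one message travels on each edge, so a delivery, which only rewrites the
   pointer at its endpoint, keeps every other message valid. *)
Definition arrow_inv (l : V -> V) (F : list (@msg V)) : Prop :=
  link_ok l /\ (forall m, In m F -> msg_ok l m) /\ ForallOrdPairs edge_distinct F.

Lemma link_ok_update (l l' : V -> V) u x :
  link_ok l -> l' u = x -> (forall y, y <> u -> l' y = l y) ->
  x = u \/ adj u x /\ l x <> u -> link_ok l'.
Proof.
  intros Hl Hu Ho Hx y Hy. destruct (classic (y = u)) as [->|Hyu].
  - rewrite Hu in *. destruct Hx as [->|[Hadj Hxu]]; [congruence|].
    rewrite Ho by exact (adj_neq adj w HT _ _ (wt_sym _ _ HT _ _ Hadj)). auto.
  - rewrite Ho in * by exact Hyu. destruct (Hl y Hy) as [Hadj Hback]. split; [exact Hadj|].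
    destruct (classic (l y = u)) as [E|n]; [|rewrite Ho; auto].
    rewrite E, Hu. intros ->. destruct Hx as [->|[_ Hxu]]; congruence.
Qed.

Lemma msg_ok_update (l l' : V -> V) u x k' x' u' s' :
  msg_ok l (k', x', u', s') -> ~ same_edge x u x' u' ->
  l' u = x -> (forall y, y <> u -> l' y = l y) -> msg_ok l' (k', x', u', s').
Proof.
  unfold same_edge. simpl. intros [A1 [A2 [A3 A4]]] Hd Hu Ho.
  repeat split; auto.
  - destruct (classic (u' = u)) as [->|n]; [rewrite Hu; intros ->; tauto | rewrite Ho; auto].
  - destruct (classic (x' = u)) as [->|n]; [rewrite Hu; intros ->; tauto | rewrite Ho; auto].
Qed.

Lemma msg_ok_not_link_edge l v k' x' u' s' :
  msg_ok l (k', x', u', s') -> ~ same_edge v (l v) x' u'.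
Proof. intros [_ [A2 [A3 _]]] [[E1 E2]|[E1 E2]]; subst; congruence. Qed.

Lemma arrow_inv_issue_send l F k v t (l' : V -> V) :
  arrow_inv l F -> nth_error reqs k = Some (v, t) -> l v <> v ->
  l' v = v -> (forall y, y <> v -> l' y = l y) ->
  arrow_inv l' ((k, v, l v, t) :: F).
Proof.
  intros [Hl [Hm Hd]] Hk Hv Hlv Ho. destruct (Hl v Hv) as [Hadj Hback].
  split; [apply (link_ok_update l l' v v); auto|]. split.
  - intros m [<-|Hin].
    + repeat split; [exact Hadj | rewrite Ho; auto | rewrite Hlv; auto |].
      exists v, t. rewrite (tdist_refl adj w HT).
      repeat split; [exact Hk | lra | lra | apply (enters_from_edge adj w HT), Hadj].
    + destruct m as [[[k' x'] u'] s']. apply (msg_ok_update l l' v v); auto.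
      destruct (Hm _ Hin) as [Hadj' _]. unfold same_edge.
      pose proof (adj_neq adj w HT _ _ Hadj'). intuition congruence.
  - constructor; [|exact Hd]. rewrite Forall_forall. intros [[[k' x'] u'] s'] Hin.
    exact (msg_ok_not_link_edge _ _ _ _ _ _ (Hm _ Hin)).
Qed.

Lemma arrow_inv_deliver l l1 l2 k x u s (l' : V -> V) :
  arrow_inv l (l1 ++ (k, x, u, s) :: l2) ->
  l' u = x -> (forall y, y <> u -> l' y = l y) -> arrow_inv l' (l1 ++ l2).
Proof.
  intros [Hl [Hm Hd]] Hlu Ho.
  destruct (Hm (k, x, u, s)) as [Hadj [_ [Hxu _]]]; [apply in_or_app; right; left; auto|].
  split; [|split].
  - apply (link_ok_update l l' u x); auto.
    right. split; [apply (wt_sym _ _ HT)|]; auto.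
  - intros [[[k' x'] u'] s'] Hin. apply (msg_ok_update l l' u x); auto.
    + apply Hm. apply in_app_or in Hin. apply in_or_app. destruct Hin; [left|right; right]; auto.
    + exact (ForallOrdPairs_removed _ edge_distinct_sym _ _ _ Hd _ Hin).
  - exact (ForallOrdPairs_remove _ _ _ _ Hd).
Qed.

Lemma arrow_inv_forward l l1 l2 k x u s tau (l' : V -> V) :
  arrow_inv l (l1 ++ (k, x, u, s) :: l2) -> s <= tau <= s + w x u -> l u <> u ->
  l' u = x -> (forall y, y <> u -> l' y = l y) ->
  arrow_inv l' (l1 ++ (k, u, l u, tau) :: l2).
Proof.
  intros Hinv Htau Hu Hlu Ho.
  destruct (arrow_inv_deliver _ _ _ _ _ _ _ _ Hinv Hlu Ho) as [Hl' [Hm' Hd']].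
  destruct Hinv as [Hl [Hm _]].
  assert (Hold : forall m, In m (l1 ++ l2) -> In m (l1 ++ (k, x, u, s) :: l2)).
  { intros m Hin. apply in_app_or in Hin. apply in_or_app.
    destruct Hin; [left|right; right]; auto. }
  destruct (Hm (k, x, u, s)) as [_ [Hux [_ [vk [tk [Hk [Hs Hen]]]]]]];
    [apply in_or_app; right; left; auto|].
  destruct (Hl u Hu) as [Hadj Hback].
  split; [exact Hl'|]. split.
  - intros m Hin. apply in_app_or in Hin. destruct Hin as [Hin|[<-|Hin]];
      [apply Hm'; apply in_or_app; auto| |apply Hm'; apply in_or_app; auto].
    repeat split; [exact Hadj | rewrite Ho; auto | rewrite Hlu; auto |].
    exists vk, tk. rewrite (enters_from_tdist adj w HT _ _ _ Hen).
    repeat split; [exact Hk | lra | lra | apply (enters_from_step adj w HT vk x); auto].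
  - apply ForallOrdPairs_insert; [exact edge_distinct_sym | exact Hd' |].
    intros [[[k' x'] u'] s'] Hin.
    exact (msg_ok_not_link_edge _ _ _ _ _ _ (Hm _ (Hold _ Hin))).
Qed.

Lemma arrow_inv_step c t c' k u :
  arrow_inv (c_link c) (c_flight c) -> labelled_step w reqs c t c' k u ->
  arrow_inv (c_link c') (c_flight c').
Proof.
  intros Hinv H. destruct H as [c k v t | c k v t l' | c l1 l2 k x u s tau vk tk l' Hf |
    c l1 l2 k x u s tau l' Hf]; simpl.
  - exact Hinv.
  - eapply arrow_inv_issue_send; eauto.
  - rewrite Hf in Hinv. eapply arrow_inv_deliver; eauto.
  - rewrite Hf in Hinv. eapply arrow_inv_forward; eauto.
Qed.

Lemma arrow_inv_init c0 : initial_config adj v0 c0 -> arrow_inv (c_link c0) (c_flight c0).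
Proof.
  intros [[Hl0 Hl] [Hf _]]. rewrite Hf.
  split; [|split; [intros m []|constructor]].
  intros u Hu. assert (Hu0 : u <> v0) by (intros ->; congruence).
  destruct (Hl u Hu0) as [p Hp]. set (z := c_link c0 u) in *.
  split; [destruct Hp as [_ [_ [Hc _]]]; apply Hc|].
  (* both u and z point along their path to v0, so z's path cannot go back to u *)
  intros Hzu. destruct (classic (z = v0)) as [Ez|Nz]; [rewrite Ez in Hzu; congruence|].
  destruct (Hl z Nz) as [p' Hp']. rewrite Hzu in Hp'.
  assert (S1 : spath adj u v0 (u :: p')) by exact (spath_suffix adj z v0 [z] u p' Hp').
  injection (spath_unique adj w HT _ _ _ _ S1 Hp) as E.
  destruct Hp' as [_ [_ [_ Hn]]]. rewrite E in Hn.
  apply NoDup_cons_iff in Hn. apply (proj1 Hn). right; left; auto.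
Qed.

Lemma nth_error_request k v t : nth_error reqs k = Some (v, t) ->
  rv v0 reqs k = v /\ rt v0 reqs k = t /\ (k < length reqs)%nat.
Proof.
  intros H. assert (Hk : (k < length reqs)%nat) by (apply nth_error_Some; congruence).
  apply (nth_error_nth _ _ (v0, 0)) in H. unfold rv, rt. now rewrite H.
Qed.

Lemma labelled_step_source c t c' k u : labelled_step w reqs c t c' k u ->
  nth_error reqs k = Some (u, t) \/ exists p s, In (k, p, u, s) (c_flight c) /\ s <= t.
Proof.
  intros H; destruct H as [| |c l1 l2 k x u s tau vk tk l' Hf|c l1 l2 k x u s tau l' Hf];
    [left|left|right|right]; auto;
    exists x, s; (split; [rewrite Hf; apply in_or_app; right; left; auto | lra]).
Qed.

Lemma labelled_step_time c t c' k u :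
  arrow_inv (c_link c) (c_flight c) -> labelled_step w reqs c t c' k u ->
  (k < length reqs)%nat /\ rt v0 reqs k <= t.
Proof.
  intros [_ [Hm _]] H. destruct (labelled_step_source _ _ _ _ _ H) as [E|[p [s [Hin Hs]]]].
  - destruct (nth_error_request _ _ _ E) as [_ [-> Hk]]. split; [exact Hk | lra].
  - destruct (Hm _ Hin) as [_ [_ [_ [vk [tk [E [Htk _]]]]]]].
    destruct (nth_error_request _ _ _ E) as [_ [-> Hk]]. split; [exact Hk | lra].
Qed.

(* An event for r_k at [u] is its issue at v_k or the arrival of find(r_k) from a
   neighbour other than the one [u] points to, so [u] lies between v_k and any [a]
   that [u] points back towards. *)
Lemma labelled_step_tdist_le c t c' k u a :
  arrow_inv (c_link c) (c_flight c) -> labelled_step w reqs c t c' k u ->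
  u = a \/ enters_from adj a (c_link c u) u ->
  tdist adj w a u <= tdist adj w a (rv v0 reqs k).
Proof.
  intros [_ [Hm _]] H Ha. destruct (labelled_step_source _ _ _ _ _ H) as [E|[p [s [Hin _]]]].
  - destruct (nth_error_request _ _ _ E) as [-> _]. lra.
  - destruct (Hm _ Hin) as [_ [Hup [_ [vk [tk [E [_ Hen]]]]]]].
    destruct (nth_error_request _ _ _ E) as [-> _].
    destruct Ha as [<-|Ha].
    + rewrite (tdist_refl adj w HT). apply (tdist_nonneg adj w HT).
    + exact (tdist_le_of_enters_from adj w HT _ _ _ _ _ Ha Hen Hup).
Qed.

Definition visit_ok (l : V -> V) (g : R * nat * V) : Prop :=
  let '(tz, z, u) := g in
  (z < length reqs)%nat /\ tz <= rt v0 reqs z + tdist adj w (rv v0 reqs z) u /\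
  (u = rv v0 reqs z \/ enters_from adj (rv v0 reqs z) (l u) u).

Definition last_visits_ok (tr : list (R * nat * V)) (l : V -> V) : Prop :=
  forall l1 g l2, tr = l1 ++ g :: l2 -> (forall e, In e l1 -> snd e <> snd g) -> visit_ok l g.

Lemma labelled_step_visit_ok c t c' k u :
  arrow_inv (c_link c) (c_flight c) -> labelled_step w reqs c t c' k u ->
  visit_ok (c_link c') (t, k, u).
Proof.
  intros [_ [Hm _]] H.
  destruct H as [c k v t _ E | c k v t l' _ E | c l1 l2 k x u s tau vk tk l' Hf Hs _ _ Hl' _ |
    c l1 l2 k x u s tau l' Hf Hs _ Hl' _]; simpl;
    try (destruct (nth_error_request _ _ _ E) as [-> [-> Hk]];
         rewrite (tdist_refl adj w HT); repeat split; auto; lra).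
  all: assert (Hin : In (k, x, u, s) (c_flight c))
         by (rewrite Hf; apply in_or_app; right; left; auto);
       destruct (Hm _ Hin) as [_ [_ [_ [vk' [tk' [E [Hs' Hen]]]]]]];
       destruct (nth_error_request _ _ _ E) as [-> [-> Hk]];
       rewrite Hl', (enters_from_tdist adj w HT _ _ _ Hen); repeat split; auto; lra.
Qed.

Lemma last_visits_ok_step tr c t c' k u :
  arrow_inv (c_link c) (c_flight c) -> last_visits_ok tr (c_link c) ->
  labelled_step w reqs c t c' k u -> last_visits_ok ((t, k, u) :: tr) (c_link c').
Proof.
  intros Hinv Hlast H [|e l1] g l2 E Hl1.
  - injection E as <- <-. eapply labelled_step_visit_ok; eauto.
  - injection E as <- E.
    assert (Hu : u <> snd g) by exact (Hl1 (t, k, u) (or_introl eq_refl)).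
    pose proof (Hlast l1 g l2 E (fun e' He' => Hl1 e' (or_intror He'))) as Hg.
    destruct g as [[tz z] ug]. simpl in *.
    rewrite (labelled_step_link_other _ _ _ _ _ _ _ H ug) by auto. exact Hg.
Qed.

Lemma trace_invariants c0 tr c th :
  initial_config adj v0 c0 -> trace w reqs c0 tr c th ->
  arrow_inv (c_link c) (c_flight c) /\ last_visits_ok tr (c_link c).
Proof.
  intros Hinit. induction 1 as [|tr c th t c' k u Htr [Hinv Hlast] Hth S].
  - split; [exact (arrow_inv_init _ Hinit)|]. intros [|] g l2 E; discriminate.
  - split; [eapply arrow_inv_step|eapply last_visits_ok_step]; eauto.
Qed.

End ArrowInvariant.

Section Shift.
Context {V : Type} (adj : V -> V -> Prop) (w : V -> V -> R) (HT : wtree adj w)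
  (reqs : list (V * R)) (v0 : V) (tj delta : R).

Hypothesis delta_ge0 : 0 <= delta.
Hypothesis delta_le_gap : forall x y, (x < length reqs)%nat -> (y < length reqs)%nat ->
  rt v0 reqs x < tj -> tj <= rt v0 reqs y -> delta <= gap adj w v0 reqs x y.
Hypothesis delta_le_late : forall y, (y < length reqs)%nat -> tj <= rt v0 reqs y ->
  delta <= rt v0 reqs y.

Let reqs' := shift_reqs tj delta reqs.

Definition late (k : nat) : Prop := tj <= rt v0 reqs k.

Definition shift_time (k : nat) (t : R) : R :=
  if Rle_dec tj (rt v0 reqs k) then t - delta else t.

Lemma length_shift : length reqs' = length reqs.
Proof. apply length_map. Qed.

Lemma nth_shift k : (k < length reqs)%nat ->
  nth k reqs' (v0, 0) = (rv v0 reqs k, shift_time k (rt v0 reqs k)).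
Proof.
  intros Hk. set (f := fun p : V * R => if Rle_dec tj (snd p) then (fst p, snd p - delta) else p).
  unfold reqs', shift_reqs. fold f.
  rewrite (nth_indep _ (v0, 0) (f (v0, 0))) by (rewrite length_map; exact Hk).
  rewrite map_nth. unfold f, shift_time, rv, rt.
  destruct (nth k reqs (v0, 0)) as [v t]. simpl. destruct (Rle_dec tj t); reflexivity.
Qed.

Lemma rv_shift k : (k < length reqs)%nat -> rv v0 reqs' k = rv v0 reqs k.
Proof. intros Hk. unfold rv at 1. now rewrite nth_shift. Qed.

Lemma rt_shift k : (k < length reqs)%nat -> rt v0 reqs' k = shift_time k (rt v0 reqs k).
Proof. intros Hk. unfold rt at 1. now rewrite nth_shift. Qed.

Lemma ord_step_cost_shift_le x y : (x < length reqs)%nat -> (y < length reqs)%nat ->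
  Rmax (tdist adj w (rv v0 reqs' x) (rv v0 reqs' y)) (rt v0 reqs' x - rt v0 reqs' y)
  <= Rmax (tdist adj w (rv v0 reqs x) (rv v0 reqs y)) (rt v0 reqs x - rt v0 reqs y).
Proof.
  intros Hx Hy. rewrite !rv_shift, !rt_shift by assumption. unfold shift_time.
  pose proof (tdist_nonneg adj w HT (rv v0 reqs x) (rv v0 reqs y)).
  destruct (Rle_dec tj (rt v0 reqs x)) as [Lx|Ex];
    destruct (Rle_dec tj (rt v0 reqs y)) as [Ly|Ey];
    [| | pose proof (delta_le_gap x y Hx Hy (Rnot_le_lt _ _ Ex) Ly); unfold gap in * |];
    unfold Rmax; repeat destruct Rle_dec; lra.
Qed.

Lemma ord_cost_shift_le o : (forall x, In x o -> (x < length reqs)%nat) ->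
  ord_cost adj w v0 reqs' o <= ord_cost adj w v0 reqs o.
Proof.
  induction o as [|x [|y o] IH]; intros Hin; simpl; try lra.
  pose proof (ord_step_cost_shift_le x y (Hin x (or_introl eq_refl))
                (Hin y (or_intror (or_introl eq_refl)))).
  assert (ord_cost adj w v0 reqs' (y :: o) <= ord_cost adj w v0 reqs (y :: o))
    by (apply IH; intros z Hz; apply Hin; right; exact Hz).
  simpl in *. lra.
Qed.

Lemma OPT_shift_le : Rbar_le (OPT adj w v0 reqs') (OPT adj w v0 reqs).
Proof.
  apply Glb_Rbar_le_dominated. intros x [o [Hp ->]].
  exists (ord_cost adj w v0 reqs' (0%nat :: o)). split.
  - exists o. rewrite length_shift. auto.
  - apply ord_cost_shift_le. intros z Hz.
    apply (Permutation_in z Hp), in_seq in Hz. lia.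
Qed.

Definition shift_msg (m : @msg V) : @msg V :=
  let '(k, x, u, s) := m in (k, x, u, shift_time k s).

Definition shift_conf (c : @config V) : @config V :=
  mkConf (c_link c) (map shift_msg (c_flight c)) (c_issued c) (c_cost c).

Definition shift_event (e : R * nat * V) : R * nat * V :=
  let '(t, k, u) := e in (shift_time k t, k, u).

Lemma nth_error_shift k v t : nth_error reqs k = Some (v, t) ->
  nth_error reqs' k = Some (v, shift_time k t).
Proof.
  intros H. destruct (nth_error_request reqs v0 _ _ _ H) as [_ [Ht _]].
  unfold reqs', shift_reqs, shift_time. rewrite nth_error_map, H, Ht. simpl.
  destruct (Rle_dec tj t); reflexivity.
Qed.

Lemma shift_time_le k s t d : s <= t <= s + d ->
  shift_time k s <= shift_time k t <= shift_time k s + d.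
Proof. unfold shift_time. destruct Rle_dec; lra. Qed.

Lemma labelled_step_shift c t c' k u : labelled_step w reqs c t c' k u ->
  exists c'', labelled_step w reqs' (shift_conf c) (shift_time k t) c'' k u /\
    conf_equiv c'' (shift_conf c').
Proof.
  intros H; destruct H as [c k v t H1 E | c k v t l' H1 E |
    c l1 l2 k x u s tau vk tk l' Hf Hs Hu E Hl' Ho | c l1 l2 k x u s tau l' Hf Hs Hu Hl' Ho].
  - apply nth_error_shift in E.
    eexists; split; [apply ls_issue_local; eauto | apply conf_equiv_refl].
  - apply nth_error_shift in E.
    eexists; split; [apply ls_issue_send with (l' := l'); eauto | apply conf_equiv_refl].
  - apply nth_error_shift in E.
    eexists; split.
    + apply ls_deliver_queue with (l' := l') (x := x) (s := shift_time k s) (vk := vk)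
        (tk := shift_time k tk) (l1 := map shift_msg l1) (l2 := map shift_msg l2);
        [simpl; rewrite Hf, map_app; reflexivity | exact (shift_time_le k _ _ _ Hs)
        | exact Hu | exact E | exact Hl' | exact Ho].
    + repeat split; simpl; auto; [rewrite map_app; apply Permutation_refl|].
      unfold shift_time. destruct Rle_dec; lra.
  - eexists; split.
    + apply ls_deliver_fwd with (l' := l') (x := x) (s := shift_time k s)
        (l1 := map shift_msg l1) (l2 := map shift_msg l2);
        [simpl; rewrite Hf, map_app; reflexivity | exact (shift_time_le k _ _ _ Hs)
        | exact Hu | exact Hl' | exact Ho].
    + repeat split; simpl; auto. rewrite map_app. apply Permutation_refl.
Qed.

(* Late events at a node come at least delta after the early events before them there,
   so they can be moved delta earlier without overtaking those. *)
Definition late_events_delayed (tr : list (R * nat * V)) : Prop :=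
  forall l1 t k u l2, tr = l1 ++ (t, k, u) :: l2 -> late k ->
  forall s k', In (s, k', u) l2 -> ~ late k' -> s <= t - delta.

Lemma early_events_before_late c0 tr c th t c' y u :
  trace w reqs c0 tr c th -> arrow_inv adj w reqs (c_link c) (c_flight c) ->
  last_visits_ok adj w reqs v0 tr (c_link c) -> late_events_delayed tr ->
  th <= t -> labelled_step w reqs c t c' y u -> late y ->
  forall s k', In (s, k', u) tr -> ~ late k' -> s <= t - delta.
Proof.
  intros Htr Hinv Hlast Hdel Hth Hst Hy s k' Hin Hk'.
  destruct (first_occurrence snd u tr) as [Hno | [l1 [g [l2 [E [Hg Hl1]]]]]];
    [exfalso; exact (Hno _ Hin eq_refl)|].
  destruct g as [[tg kg] ug]. simpl in Hg. subst ug.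
  assert (Hin2 : (tg, kg, u) = (s, k', u) \/ In (s, k', u) l2).
  { rewrite E in Hin. apply in_app_or in Hin.
    destruct Hin as [Hin|Hin]; [exfalso; exact (Hl1 _ Hin eq_refl) | exact Hin]. }
  assert (Hstg : s <= tg).
  { destruct Hin2 as [Eq|Hin2]; [injection Eq as -> _; lra|].
    exact (trace_sorted _ _ _ _ _ _ Htr l1 _ l2 E _ Hin2). }
  assert (Htg : tg <= th).
  { apply (trace_time _ _ _ _ _ _ Htr (tg, kg, u)). rewrite E. apply in_or_app. right; left; auto. }
  destruct (classic (late kg)) as [Lg|Eg].
  - destruct Hin2 as [Eq|Hin2]; [injection Eq as _ ->; contradiction|].
    pose proof (Hdel l1 tg kg u l2 E Lg s k' Hin2 Hk'). lra.
  - destruct (Hlast l1 _ l2 E Hl1) as [Hkg [Htgd Hat]].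
    destruct (labelled_step_time adj w reqs v0 _ _ _ _ _ Hinv Hst) as [Hylen Hyt].
    pose proof (labelled_step_tdist_le adj w HT reqs v0 _ _ _ _ _ _ Hinv Hst Hat).
    pose proof (delta_le_gap kg y Hkg Hylen (Rnot_le_lt _ _ Eg) Hy). unfold gap in *. lra.
Qed.

Lemma late_events_delayed_trace c0 tr c th :
  initial_config adj v0 c0 -> trace w reqs c0 tr c th -> late_events_delayed tr.
Proof.
  intros Hinit. induction 1 as [|tr c th t c' k u Htr IH Hth S];
    intros l1 t0 k0 u0 l2 E; [destruct l1; discriminate|].
  destruct l1 as [|e l1]; [|injection E as _ E; exact (IH l1 t0 k0 u0 l2 E)].
  injection E as -> -> -> <-. intros Hk.
  destruct (trace_invariants adj w HT reqs v0 _ _ _ _ Hinit Htr) as [Hinv Hlast].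
  exact (early_events_before_late _ _ _ _ _ _ _ _ Htr Hinv Hlast IH Hth S Hk).
Qed.

Lemma shifted_events_after_late c0 tr c th t c' k u trR :
  initial_config adj v0 c0 -> trace w reqs c0 tr c th -> th <= t ->
  labelled_step w reqs c t c' k u -> late k ->
  (forall e, In e trR -> exists e0, In e0 tr /\ e = shift_event e0) ->
  forall s k' u', In (s, k', u') trR -> t - delta < s -> u' <> u /\ k' <> k.
Proof.
  intros Hinit Htr Hth S Hk Hmem s k' u' Hin Hlt.
  destruct (Hmem _ Hin) as [[[s0 k0] u0] [Hin0 Ee]]. unfold shift_event, shift_time in Ee.
  pose proof (trace_time _ _ _ _ _ _ Htr _ Hin0) as Hs0. simpl in Hs0.
  destruct (Rle_dec tj (rt v0 reqs k0)) as [L0|E0]; injection Ee as -> -> ->; [lra|].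
  destruct (trace_invariants adj w HT reqs v0 _ _ _ _ Hinit Htr) as [Hinv Hlast].
  split; intros ->; [|exact (E0 Hk)].
  pose proof (early_events_before_late _ _ _ _ _ _ _ _ Htr Hinv Hlast
    (late_events_delayed_trace _ _ _ _ Hinit Htr) Hth S Hk s0 k0 Hin0 E0). lra.
Qed.

Lemma shifted_trace c0 tr c th :
  initial_config adj v0 c0 -> trace w reqs c0 tr c th ->
  exists trR cR thR, trace w reqs' c0 trR cR thR /\ conf_equiv cR (shift_conf c) /\
    thR <= th /\ (forall e, In e trR -> exists e0, In e0 tr /\ e = shift_event e0).
Proof.
  intros Hinit. induction 1 as [|tr c th t c' k u Htr IH Hth S].
  - exists [], c0, 0. split; [constructor|]. split; [|split; [lra | intros e []]].
    destruct Hinit as [_ [Hf _]]. repeat split; simpl; auto. rewrite Hf. constructor.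
  - destruct IH as [trR [cR [thR [TR [Hc [HthR Hmem]]]]]].
    destruct (labelled_step_shift _ _ _ _ _ S) as [c'' [S' Hc'']].
    destruct (labelled_step_equiv _ _ _ _ _ _ _ _ S' (conf_equiv_sym _ _ Hc)) as [d' [S'' Hd']].
    assert (Hext : exists trR' cR' thR', trace w reqs' c0 trR' cR' thR' /\
      conf_equiv d' cR' /\ thR' <= t /\
      forall e, In e trR' -> e = shift_event (t, k, u) \/ In e trR).
    { unfold shift_event, shift_time in S'' |- *. destruct (Rle_dec tj (rt v0 reqs k)) as [L|E].
      - destruct (trace_invariants adj w HT reqs v0 _ _ _ _ Hinit Htr) as [Hinv _].
        destruct (labelled_step_time adj w reqs v0 _ _ _ _ _ Hinv S) as [Hk Hkt].
        pose proof (delta_le_late k Hk L).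
        destruct (trace_insert _ _ _ _ _ _ _ _ _ _ TR S'')
          as [trR' [c2 [th' [TR' [Hc2 [Hth' Hin']]]]]];
          [lra | exact (shifted_events_after_late _ _ _ _ _ _ _ _ _ Hinit Htr Hth S L Hmem) |].
        exists trR', c2, th'. split; [exact TR'|]. split; [exact Hc2|]. split; [|exact Hin'].
        unfold Rmax in Hth'. destruct Rle_dec; lra.
      - exists ((t, k, u) :: trR), d', t. split; [econstructor; eauto; lra|].
        split; [apply conf_equiv_refl|]. split; [lra|]. intros e [<-|He]; auto. }
    destruct Hext as [trR' [cR' [thR' [TR' [HcR' [Hth' Hin']]]]]].
    exists trR', cR', thR'. split; [exact TR'|]. split.
    { eapply conf_equiv_trans; [apply conf_equiv_sym, HcR'|].
      eapply conf_equiv_trans; [apply conf_equiv_sym, Hd'|exact Hc'']. }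
    split; [exact Hth'|].
    intros e He. destruct (Hin' e He) as [->|He'].
    + exists (t, k, u). split; [left|]; reflexivity.
    + destruct (Hmem e He') as [e0 [Hin0 ->]]. exists e0. split; [right|]; auto.
Qed.

Lemma arrow_costs_shift x : arrow_costs adj w v0 reqs x -> arrow_costs adj w v0 reqs' x.
Proof.
  intros [c0 [cf [Hinit [Hsteps [[Hff Hfi] ->]]]]].
  destruct (steps_trace _ _ _ _ _ _ Hsteps [] (tr_nil _ _ _)) as [tr [th Htr]].
  destruct (shifted_trace c0 tr cf th Hinit Htr) as [trR [cR [thR [TR [[_ [C2 [C3 C4]]] _]]]]].
  exists c0, cR. split; [exact Hinit|]. split; [eapply trace_steps; eauto; constructor|].
  simpl in *. rewrite Hff in C2. split; [split|symmetry; exact C4].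
  - apply Permutation_nil, Permutation_sym, C2.
  - intros k Hk. apply C3, Hfi. rewrite length_shift in Hk. exact Hk.
Qed.

Lemma arrow_wc_shift_ge : Rbar_le (arrow_wc adj w v0 reqs) (arrow_wc adj w v0 reqs').
Proof.
  apply (is_lub_Rbar_subset _ _ _ _ arrow_costs_shift); apply Lub_Rbar_correct.
Qed.

End Shift.

Lemma valid_requests_rt_nonneg {V : Type} (v0 : V) reqs k :
  valid_requests v0 reqs -> (k < length reqs)%nat -> 0 <= rt v0 reqs k.
Proof.
  intros [_ [H _]] Hk. unfold rt.
  destruct (nth k reqs (v0, 0)) as [v t] eqn:E. simpl. apply (H v).
  rewrite <- E. apply nth_In, Hk.
Qed.

Theorem lemma15 (V : Type) (adj : V -> V -> Prop) (w : V -> V -> R)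
    (reqs : list (V * R)) (v0 : V) (i j a b : nat) :
  wtree adj w ->
  valid_requests v0 reqs ->
  (i < length reqs)%nat -> (j < length reqs)%nat -> i <> j ->
  rt v0 reqs i <= rt v0 reqs j ->
  (forall k, (k < length reqs)%nat ->
     ~ (rt v0 reqs i < rt v0 reqs k < rt v0 reqs j)) ->
  (a < length reqs)%nat -> (b < length reqs)%nat ->
  rt v0 reqs a <= rt v0 reqs i -> rt v0 reqs j <= rt v0 reqs b ->
  (forall a' b', (a' < length reqs)%nat -> (b' < length reqs)%nat ->
     rt v0 reqs a' <= rt v0 reqs i -> rt v0 reqs j <= rt v0 reqs b' ->
     gap adj w v0 reqs a b <= gap adj w v0 reqs a' b') ->
  0 < gap adj w v0 reqs a b ->
  let reqs' := shift_reqs (rt v0 reqs j) (gap adj w v0 reqs a b) reqs in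
  Rbar_le (arrow_wc adj w v0 reqs) (arrow_wc adj w v0 reqs') /\
  Rbar_le (OPT adj w v0 reqs') (OPT adj w v0 reqs).
Proof.
  intros HT HV _ _ _ _ Hcons Ha _ Hta _ Hmin Hpos reqs'.
  (* requests before r_j are those up to r_i, since r_i and r_j are consecutive *)
  assert (Hgap : forall x y, (x < length reqs)%nat -> (y < length reqs)%nat ->
    rt v0 reqs x < rt v0 reqs j -> rt v0 reqs j <= rt v0 reqs y ->
    gap adj w v0 reqs a b <= gap adj w v0 reqs x y).
  { intros x y Hx Hy Hxj Hyj. apply Hmin; [exact Hx | exact Hy | | exact Hyj].
    apply Rnot_lt_le. intros Hix. exact (Hcons x Hx (conj Hix Hxj)). }
  assert (Hlate : forall y, (y < length reqs)%nat -> rt v0 reqs j <= rt v0 reqs y ->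
    gap adj w v0 reqs a b <= rt v0 reqs y).
  { intros y Hy Hyj. pose proof (Hmin a y Ha Hy Hta Hyj).
    pose proof (valid_requests_rt_nonneg v0 reqs a HV Ha).
    pose proof (tdist_nonneg adj w HT (rv v0 reqs a) (rv v0 reqs y)).
    unfold gap in *. lra. }
  split.
  - exact (arrow_wc_shift_ge adj w HT reqs v0 _ _ (Rlt_le _ _ Hpos) Hgap Hlate).
  - exact (OPT_shift_le adj w HT reqs v0 _ _ (Rlt_le _ _ Hpos) Hgap).
Qed.
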